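(* Let $p>1$, $1/p+1/q=1$, let $\{(x_i,y_i)\}_{i=1}^n\subset\mathbb{R}^d\times\{\pm1\}$ be linearly separable with $\max_i\|x_i\|_q\le C$, and let $L(w)=\frac1n\sum_i\exp(-y_i\langle w,x_i\rangle)$ (exponential loss). Let $w_t$ be the iterates of $p$-GD with step size $\eta$ small enough that $\psi-\eta L$ is convex (at least locally at the iterates). Then $\|w_t\|_p\in\Theta(\log t)$; more precisely, $$\|w_t\|_p\ge\frac1C\left(\log t-p\log\log t\right)+O(1)\quad\text{as }t\to\infty,\qquad \limsup_{t\to\infty}\frac{\|w_t\|_p}{\log t}\le\hat\gamma_p^{-1}\frac{p}{p-1}.$$
   Context: $\psi(w)=\frac1p\|w\|_p^p$; $p$-GD is the iteration $\nabla\psi(w_{t+1})=\nabla\psi(w_t)-\eta\nabla L(w_t)$ from some initialization $w_0$. The max-margin direction is $\bar w^{\mathrm{mm}}_p=\arg\max_{\|w\|_p\le1}\min_i y_i\langle x_i,w\rangle$ and $\hat\gamma_p>0$ is the optimal value of this maximization (the max margin). *)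

From HB Require Import structures.
From mathcomp Require Import all_boot all_order all_algebra.
From mathcomp Require Import all_classical all_reals all_analysis.
Set Implicit Arguments. Unset Strict Implicit. Unset Printing Implicit Defensive.
Import Order.TTheory GRing.Theory Num.Theory.
Local Open Scope ring_scope.
Local Open Scope classical_set_scope.

Section Defs.
Variables (R : realType) (d : nat).
Definition vec := 'I_d -> R.

Definition inner (w x : vec) : R := \sum_(j < d) w j * x j.

Definition pnorm (p : R) (w : vec) : R := (\sum_(j < d) `|w j| `^ p) `^ p^-1.

Definition psi (p : R) (w : vec) : R := p^-1 * \sum_(j < d) `|w j| `^ p.

Definition grad_psi (p : R) (w : vec) : vec :=
  fun j => Num.sg (w j) * `|w j| `^ (p - 1).

Definition expL (n : nat) (x : 'I_n -> vec) (y : 'I_n -> R) (w : vec) : R :=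
  n%:R^-1 * \sum_(i < n) expR (- (y i * inner w (x i))).

Definition grad_expL (n : nat) (x : 'I_n -> vec) (y : 'I_n -> R) (w : vec) : vec :=
  fun j => - (n%:R^-1 * \sum_(i < n) expR (- (y i * inner w (x i))) * y i * x i j).

Definition convex_on (S : set vec) (f : vec -> R) : Prop :=
  forall u v, S u -> S v -> forall l : R, 0 <= l <= 1 ->
    f (fun j => l * u j + (1 - l) * v j) <= l * f u + (1 - l) * f v.

Definition segment (u v : vec) : set vec :=
  [set z | exists2 s : R, 0 <= s <= 1 & z = (fun j => (1 - s) * u j + s * v j)].

Definition pGD (p eta : R) (n : nat) (x : 'I_n -> vec) (y : 'I_n -> R)
  (w : nat -> vec) : Prop :=
  forall t j, grad_psi p (w t.+1) j = grad_psi p (w t) j - eta * grad_expL x y (w t) j.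

Definition lin_separable (n : nat) (x : 'I_n -> vec) (y : 'I_n -> R) : Prop :=
  exists w : vec, forall i, 0 < y i * inner (x i) w.

(* max margin: optimal value of max_{||w||_p <= 1} min_i y_i <x_i, w>,
   written as the sup of all m with m <= y_i <x_i,w> for all i, ||w||_p <= 1 *)
Definition max_margin (p : R) (n : nat) (x : 'I_n -> vec) (y : 'I_n -> R) : R :=
  sup [set m : R | exists w : vec, pnorm p w <= 1 /\
                   forall i, m <= y i * inner (x i) w].
End Defs.

(* Mirror-descent regret bound: convexity of psi - eta L along each step makes p-GD a
   descent method satisfying, for every u and the Bregman divergence D of psi,
     eta t L(w_t) + D(u, w_t) <= D(u, w_0) + eta t L(u).
   Take u = (ln t / m) v for a direction v of margin m, so that t L(u) <= 1.
   Lower bound: by Hoelder, L(w) >= exp(-C ||w||_p) / n, so dropping D(u, w_t) >= 0 gives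
   t exp(-C ||w_t||_p) = O((ln t)^p).
   Upper bound: D(u, w_t) >= psi(u) + (1 - 1/p) ||w_t||^p - ||w_t||^(p-1) ||u||, and psi(u)
   cancels against D(u, w_0) <= psi(u) + O(ln t); hence ||w_t||_p <= (p/(p-1)) ||u|| + o(ln t),
   i.e. (p/(p-1)) ln t / m, where m can be taken arbitrarily close to the max margin. *)

From Pilot Require Import Defs.
From HB Require Import structures.
From mathcomp Require Import all_boot all_order all_algebra.
From mathcomp Require Import all_classical all_reals all_analysis.
From mathcomp Require Import ring lra.
Set Implicit Arguments. Unset Strict Implicit. Unset Printing Implicit Defensive.
Import Order.TTheory GRing.Theory Num.Theory.
Local Open Scope ring_scope.
Local Open Scope classical_set_scope.

Section Vectors.
Variables (R : realType) (d : nat).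
Local Notation vec := (vec R d).
Local Notation inner := (@inner R d).

Lemma innerC (u v : vec) : inner u v = inner v u.
Proof. by apply: eq_bigr => j _; rewrite mulrC. Qed.

Lemma inner_linl (a b : R) (u v z : vec) :
  inner (fun j => a * u j + b * v j) z = a * inner u z + b * inner v z.
Proof.
rewrite /Defs.inner !mulr_sumr -big_split /=; apply: eq_bigr => j _; ring.
Qed.

Lemma inner_linr (a b : R) (u v z : vec) :
  inner z (fun j => a * u j + b * v j) = a * inner z u + b * inner z v.
Proof. by rewrite innerC inner_linl !(innerC z). Qed.

Lemma innerZl (a : R) (u z : vec) : inner (fun j => a * u j) z = a * inner u z.
Proof. by rewrite /Defs.inner mulr_sumr; apply: eq_bigr => j _; rewrite mulrA. Qed.

Lemma innerZr (a : R) (u z : vec) : inner z (fun j => a * u j) = a * inner z u.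
Proof. by rewrite innerC innerZl innerC. Qed.

Lemma inner_subZl (a b c : vec) (e : R) (z : vec) :
  (forall j, a j = b j - e * c j) -> inner a z = inner b z - e * inner c z.
Proof.
move=> abc; rewrite /Defs.inner mulr_sumr -sumrB.
by apply: eq_bigr => j _; rewrite abc; ring.
Qed.

Lemma pnorm_ge0 (p : R) (v : vec) : 0 <= pnorm p v.
Proof. exact: powR_ge0. Qed.

Lemma pnorm_powR (p : R) (v : vec) : 0 < p ->
  pnorm p v `^ p = \sum_(j < d) `|v j| `^ p.
Proof.
move=> p0; rewrite /pnorm -powRrM mulVf ?gt_eqF // powRr1 //.
by apply: sumr_ge0 => j _; exact: powR_ge0.
Qed.

Lemma pnorm_eq0 (p : R) (v : vec) : 0 < p -> pnorm p v = 0 -> forall j, v j = 0.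
Proof.
move=> p0 v0; have := pnorm_powR v p0; rewrite v0 powR0 ?gt_eqF // => /esym/eqP.
rewrite psumr_eq0 => [/allP vj0 j|j _]; last exact: powR_ge0.
by apply/eqP; rewrite -normr_eq0; apply/eqP/(@powR_eq0_eq0 _ _ p)/eqP/vj0/mem_index_enum.
Qed.

Lemma sum_powR_normZ (p c : R) (v : vec) : 0 <= c ->
  \sum_(j < d) `|c * v j| `^ p = c `^ p * \sum_(j < d) `|v j| `^ p.
Proof.
move=> c0; rewrite mulr_sumr; apply: eq_bigr => j _.
by rewrite normrM powRM // ger0_norm.
Qed.

Lemma pnormZ (p c : R) (v : vec) : 0 < p -> 0 <= c ->
  pnorm p (fun j => c * v j) = c * pnorm p v.
Proof.
move=> p0 c0; rewrite /pnorm sum_powR_normZ // powRM ?powR_ge0 //; last first.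
  by apply: sumr_ge0 => j _; exact: powR_ge0.
by rewrite -powRrM mulfV ?gt_eqF // powRr1.
Qed.

Lemma psiZ (p c : R) (v : vec) : 0 <= c -> psi p (fun j => c * v j) = c `^ p * psi p v.
Proof. by move=> c0; rewrite /psi sum_powR_normZ // mulrCA. Qed.

Lemma powR_div (x y r : R) : 0 <= x -> 0 <= y -> (x / y) `^ r = x `^ r / y `^ r.
Proof.
move=> x0 y0; rewrite powRM ?invr_ge0 // -powR_inv1 // powRAC powR_inv1 //.
exact: powR_ge0.
Qed.

Lemma young_scaled (p q s t A B : R) : 0 < p -> 0 < q -> p^-1 + q^-1 = 1 ->
  0 <= s -> 0 <= t -> 0 < A -> 0 < B ->
  s * t <= A * B * (s `^ p / A `^ p / p + t `^ q / B `^ q / q).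
Proof.
move=> p0 q0 pq s0 t0 A0 B0.
have : s / A * (t / B) <= (s / A) `^ p / p + (t / B) `^ q / q.
  exact: conjugate_powR (divr_ge0 s0 (ltW A0)) (divr_ge0 t0 (ltW B0)) p0 q0 pq.
rewrite !powR_div ?(ltW A0) ?(ltW B0) // -(ler_pM2l (mulr_gt0 A0 B0)).
by have -> : A * B * (s / A * (t / B)) = s * t by field; rewrite !gt_eqF.
Qed.

Lemma hoelder_sum (p q : R) (a b : vec) : 1 < p -> p^-1 + q^-1 = 1 ->
  \sum_(j < d) `|a j| * `|b j| <= pnorm p a * pnorm q b.
Proof.
move=> p1 pq; have p0 : 0 < p by lra.
have ip1 : p^-1 < 1 by rewrite invf_lt1.
have q0 : 0 < q by rewrite -invr_gt0; lra.
have [A0|Ana] := eqVneq (pnorm p a) 0.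
  rewrite big1 ?mulr_ge0 ?pnorm_ge0 // => j _.
  by rewrite (pnorm_eq0 p0 A0) normr0 mul0r.
have [B0|Bnz] := eqVneq (pnorm q b) 0.
  rewrite big1 ?mulr_ge0 ?pnorm_ge0 // => j _.
  by rewrite (pnorm_eq0 q0 B0) normr0 mulr0.
have Ap : 0 < pnorm p a by rewrite lt_neqAle eq_sym Ana pnorm_ge0.
have Bp : 0 < pnorm q b by rewrite lt_neqAle eq_sym Bnz pnorm_ge0.
have young j := young_scaled p0 q0 pq (normr_ge0 (a j)) (normr_ge0 (b j)) Ap Bp.
apply: le_trans (ler_sum _ (fun j _ => young j)) _.
rewrite -mulr_sumr big_split /= -!mulr_suml -(pnorm_powR a p0) -(pnorm_powR b q0).
move: (pnorm p a) (pnorm q b) Ap Bp => A B Ap Bp.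
have -> : A * B * (A `^ p / A `^ p / p + B `^ q / B `^ q / q) = A * B * (p^-1 + q^-1).
  by field; rewrite !gt_eqF ?powR_gt0.
by rewrite pq mulr1.
Qed.

Lemma hoelder_inner (p q : R) (a b : vec) : 1 < p -> p^-1 + q^-1 = 1 ->
  `|inner a b| <= pnorm p a * pnorm q b.
Proof.
move=> p1 pq; apply: le_trans (hoelder_sum a b p1 pq).
apply: le_trans (ler_norm_sum _ _ _) _.
by apply: ler_sum => j _; rewrite normrM.
Qed.

End Vectors.

Section MirrorMap.
Variables (R : realType) (d : nat) (p : R).
Hypothesis p1 : 1 < p.
Local Notation vec := (vec R d).
Local Notation inner := (@inner R d).
Local Notation G := (grad_psi p).

Let p0 : 0 < p. Proof. exact: lt_trans p1. Qed.

Lemma sgr_norm_powR_mul (a : R) : Num.sg a * `|a| `^ (p - 1) * a = `|a| `^ p.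
Proof. by rewrite mulrAC -normrEsg mulr_powRB1. Qed.

Lemma norm_powR_tangent (a b : R) :
  p^-1 * `|a| `^ p + Num.sg a * `|a| `^ (p - 1) * (b - a) <= p^-1 * `|b| `^ p.
Proof.
have [->|a0] := eqVneq a 0.
  rewrite sgr0 !mul0r normr0 powR0 ?gt_eqF // mulr0 addr0.
  by rewrite mulr_ge0 ?invr_ge0 ?powR_ge0 ?ltW.
have p'0 : 0 < p / (p - 1) by rewrite divr_gt0 // subr_gt0.
have p'V : (p / (p - 1))^-1 = 1 - p^-1.
  by field; rewrite subr_eq0 !gt_eqF.
(* Young's inequality for |a|^(p-1) and |b| with conjugate exponents p/(p-1) and p *)
have young : `|a| `^ (p - 1) * `|b| <= `|a| `^ p * (1 - p^-1) + `|b| `^ p / p.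
  have := conjugate_powR (powR_ge0 `|a| (p - 1)) (normr_ge0 b) p'0 p0.
  by rewrite p'V subrK -powRrM (mulrC (p - 1)) divfK ?subr_eq0 ?gt_eqF //; apply.
have sgb : Num.sg a * `|a| `^ (p - 1) * b <= `|a| `^ (p - 1) * `|b|.
  apply: le_trans (ler_norm _) _.
  by rewrite !normrM normr_sg a0 mul1r norm_powR ?normr_id.
rewrite mulrBr sgr_norm_powR_mul.
move: young sgb; rewrite [`|b| `^ p / p]mulrC.
set A := `|a| `^ p; set B := `|b| `^ p; set S := Num.sg a * _ * b.
lra.
Qed.

Lemma psiE (w : vec) : psi p w = p^-1 * pnorm p w `^ p.
Proof. by rewrite pnorm_powR. Qed.

Lemma inner_grad_psi_self (w : vec) : inner (G w) w = pnorm p w `^ p.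
Proof.
by rewrite pnorm_powR //; apply: eq_bigr => j _; rewrite sgr_norm_powR_mul.
Qed.

Lemma psi_tangent (w v : vec) :
  psi p w + (inner (G w) v - inner (G w) w) <= psi p v.
Proof.
rewrite /psi /Defs.inner -sumrB !mulr_sumr -big_split /=.
by apply: ler_sum => j _; rewrite /grad_psi -mulrBr; exact: norm_powR_tangent.
Qed.

Variable q : R.
Hypothesis pq : p^-1 + q^-1 = 1.

Lemma pnorm_grad_psi (w : vec) : pnorm q (G w) = pnorm p w `^ (p - 1).
Proof.
have pm1 : p - 1 != 0 by rewrite subr_eq0 gt_eqF.
have qV : q^-1 = (p - 1) / p.
  by rewrite (_ : q^-1 = 1 - p^-1); [field; rewrite gt_eqF | rewrite -pq addrAC subrr add0r].
have qE : q = p / (p - 1) by rewrite -[q]invrK qV invf_div.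
rewrite /pnorm -powRrM (_ : p^-1 * (p - 1) = q^-1); last by rewrite qV mulrC.
congr (_ `^ _); apply: eq_bigr => j _; rewrite /grad_psi.
have [->|wj0] := eqVneq (w j) 0.
  have q0 : 0 < q by rewrite qE divr_gt0 // subr_gt0.
  by rewrite sgr0 mul0r normr0 !powR0 ?gt_eqF.
rewrite normrM normr_sg wj0 mul1r norm_powR ?normr_id // -powRrM.
by rewrite qE (mulrC (p - 1)) (divfK pm1).
Qed.

Lemma inner_grad_psi_le (w u : vec) :
  inner (G w) u <= pnorm p w `^ (p - 1) * pnorm p u.
Proof.
apply: le_trans (ler_norm _) _.
by rewrite innerC mulrC -pnorm_grad_psi; exact: hoelder_inner.
Qed.

End MirrorMap.

Section Bregman.
Variables (R : realType) (d : nat) (p : R).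
Hypothesis p1 : 1 < p.
Local Notation vec := (vec R d).
Local Notation inner := (@inner R d).
Local Notation G := (grad_psi p).

Definition bregman (u v : vec) : R :=
  psi p u - psi p v - (inner (G v) u - inner (G v) v).

Lemma bregman_ge0 (u v : vec) : 0 <= bregman u v.
Proof. by have := psi_tangent p1 v u; rewrite /bregman; lra. Qed.

Lemma bregmanxx (v : vec) : bregman v v = 0.
Proof. by rewrite /bregman !subrr. Qed.

Lemma bregman_ge_pnorm (q : R) (u w : vec) : p^-1 + q^-1 = 1 ->
  psi p u + (1 - p^-1) * pnorm p w `^ p - pnorm p w `^ (p - 1) * pnorm p u
    <= bregman u w.
Proof.
move=> pq; have := inner_grad_psi_le p1 pq w u.
rewrite /bregman inner_grad_psi_self // (psiE p1 w).
move: (psi p u) (inner (G w) u) (pnorm p w `^ p) (_ * pnorm p u) => A B N D.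
lra.
Qed.

Lemma bregmanZl_le (r : R) (v w : vec) : 0 <= r ->
  bregman (fun j => r * v j) w <=
    r `^ p * psi p v + r * `|inner (G w) v| + (`|psi p w| + `|inner (G w) w|).
Proof.
move=> r0; rewrite /bregman psiZ // innerZr.
have := ler_norm (- (psi p w)); have := ler_norm (inner (G w) w).
have := ler_wpM2l r0 (ler_norm (- inner (G w) v)).
rewrite !normrN mulrN.
move: (r * _) (r * `|_|) (inner (G w) w) (psi p w) (r `^ p * _) => A B C D E.
move: `|C| `|D| => C' D'.
lra.
Qed.

End Bregman.

Lemma expR_tangent (R : realType) (a b : R) : expR a * (1 + (b - a)) <= expR b.
Proof.
rewrite -[in leRHS](subrK a b) expRD mulrC.
by rewrite ler_wpM2r ?expR_ge0 // expR_ge1Dx.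
Qed.

Lemma expR_le_quadratic (R : realType) (v : R) : v <= 2^-1 -> expR v <= 1 + v + 2 * v ^+ 2.
Proof.
move=> hv.
have h1 : 1 - v <= expR (- v) by exact: expR_ge1Dx.
have h2 : expR v * expR (- v) = 1 by rewrite expRxMexpNx_1.
have e0 : 0 < expR v := expR_gt0 v.
have h3 : expR v * (1 - v) <= 1 by nra.
have h4 : 1 <= (1 - v) * (1 + v + 2 * v ^+ 2).
  have : 0 <= v ^+ 2 * (1 - 2 * v) by apply: mulr_ge0; [exact: sqr_ge0| lra].
  by move=> h; nra.
nra.
Qed.

Section ExpLoss.
Variables (R : realType) (d n : nat) (x : 'I_n -> vec R d) (y : 'I_n -> R).
Local Notation vec := (vec R d).
Local Notation inner := (@inner R d).
Local Notation L := (expL x y).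
Local Notation gL := (grad_expL x y).

Lemma expL_ge0 (v : vec) : 0 <= L v.
Proof.
by rewrite mulr_ge0 ?invr_ge0 ?ler0n //; apply: sumr_ge0 => i _; exact: expR_ge0.
Qed.

Lemma inner_grad_expL (w v : vec) : inner (gL w) v =
  - (n%:R^-1 * \sum_(i < n) expR (- (y i * inner w (x i))) * y i * inner v (x i)).
Proof.
rewrite /Defs.inner /grad_expL.
transitivity (\sum_(j < d) \sum_(i < n)
   - (n%:R^-1 * (expR (- (y i * inner w (x i))) * y i * x i j * v j))).
  apply: eq_bigr => j _.
  by rewrite mulNr -mulrA mulr_suml mulr_sumr -sumrN; apply: eq_bigr => i _; ring.
rewrite exchange_big /=; symmetry; rewrite mulr_sumr -sumrN; apply: eq_bigr => i _.
by rewrite /Defs.inner !mulr_sumr -sumrN; apply: eq_bigr => j _; ring.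
Qed.

Lemma expL_tangent (u v : vec) : L v + (inner (gL v) u - inner (gL v) v) <= L u.
Proof.
have -> : L v + (inner (gL v) u - inner (gL v) v) =
   n%:R^-1 * \sum_(i < n) expR (- (y i * inner v (x i))) *
      (1 + (- (y i * inner u (x i)) - - (y i * inner v (x i)))).
  rewrite /expL !inner_grad_expL !mulr_sumr -!sumrN -!big_split /=.
  by apply: eq_bigr => i _; ring.
rewrite /expL ler_wpM2l ?invr_ge0 ?ler0n //; apply: ler_sum => i _.
exact: expR_tangent.
Qed.

Lemma expL_segment_le (w0 w1 : vec) : exists2 K : R, 0 <= K & exists2 l0 : R, 0 < l0 &
  forall l, 0 < l <= l0 -> L (fun j => l * w1 j + (1 - l) * w0 j) <=
    L w0 + l * (inner (gL w0) w1 - inner (gL w0) w0) + l ^+ 2 * K.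
Proof.
pose c i := - (y i * inner w0 (x i)).
pose dl i := - (y i * (inner w1 (x i) - inner w0 (x i))).
pose S := \sum_(i < n) `|dl i|.
have S0 : 0 <= S by apply: sumr_ge0 => i _; exact: normr_ge0.
exists (n%:R^-1 * \sum_(i < n) 2 * expR (c i) * dl i ^+ 2).
  rewrite mulr_ge0 ?invr_ge0 ?ler0n //; apply: sumr_ge0 => i _.
  by rewrite mulr_ge0 ?sqr_ge0 // mulr_ge0 ?expR_ge0.
exists (2 * (1 + S))^-1; first by rewrite invr_gt0; lra.
move=> l /andP[l0 hl].
have -> : inner (gL w0) w1 - inner (gL w0) w0 = n%:R^-1 * \sum_(i < n) expR (c i) * dl i.
  rewrite !inner_grad_expL !mulr_sumr -!sumrN -!big_split /=.
  by apply: eq_bigr => i _; rewrite /c /dl; ring.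
have -> : L w0 + l * (n%:R^-1 * \sum_(i < n) expR (c i) * dl i) +
    l ^+ 2 * (n%:R^-1 * \sum_(i < n) 2 * expR (c i) * dl i ^+ 2) =
    n%:R^-1 * \sum_(i < n) expR (c i) * (1 + l * dl i + 2 * (l * dl i) ^+ 2).
  rewrite /expL !mulr_sumr -!big_split /=.
  by apply: eq_bigr => i _; rewrite /c; ring.
rewrite /expL ler_wpM2l ?invr_ge0 ?ler0n //; apply: ler_sum => i _.
have -> : - (y i * inner (fun j => l * w1 j + (1 - l) * w0 j) (x i)) = c i + l * dl i.
  by rewrite inner_linl /c /dl; ring.
rewrite expRD ler_wpM2l ?expR_ge0 //; apply: expR_le_quadratic.
have dlS : dl i <= 1 + S.
  have : `|dl i| <= S by rewrite /S (bigD1 i) //= lerDl sumr_ge0.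
  by have := ler_norm (dl i); lra.
have : l * (1 + S) <= (2 * (1 + S))^-1 * (1 + S) by rewrite ler_wpM2r //; lra.
rewrite invfM -mulrA mulVf ?mulr1; last by rewrite gt_eqF //; lra.
by have := ler_wpM2l (ltW l0) dlS; lra.
Qed.

Lemma expLZ_le_margin (v : vec) (m r : R) : (0 < n)%N -> 0 <= r ->
  (forall i, m <= y i * inner (x i) v) -> L (fun j => r * v j) <= expR (- (r * m)).
Proof.
move=> n0 r0 hm; rewrite /expL ler_pdivrMl ?ltr0n //.
have -> : n%:R * expR (- (r * m)) = \sum_(i < n) expR (- (r * m)).
  by rewrite sumr_const card_ord mulr_natl.
apply: ler_sum => i _.
by rewrite ler_expR lerN2 innerZl innerC mulrCA ler_wpM2l.
Qed.

Variables (p q C : R).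
Hypotheses (p1 : 1 < p) (pq : p^-1 + q^-1 = 1).
Hypotheses (y_sign : forall i, y i = 1 \/ y i = -1) (x_bounded : forall i, pnorm q (x i) <= C).

Lemma margin_le_pnorm (v : vec) i : y i * inner (x i) v <= pnorm p v * C.
Proof.
apply: le_trans (ler_norm _) _.
have -> : `|y i * inner (x i) v| = `|inner v (x i)|.
  by rewrite normrM innerC; case: (y_sign i) => ->; rewrite ?normrN normr1 mul1r.
apply: le_trans (hoelder_inner v (x i) p1 pq) _.
by rewrite ler_wpM2l ?pnorm_ge0.
Qed.

Lemma expL_ge_pnorm (v : vec) : (0 < n)%N -> n%:R^-1 * expR (- (C * pnorm p v)) <= L v.
Proof.
move=> n0; pose i0 : 'I_n := Ordinal n0.
rewrite /expL ler_wpM2l ?invr_ge0 ?ler0n //.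
apply: le_trans (_ : expR (- (y i0 * inner v (x i0))) <= _).
  by rewrite ler_expR lerN2 innerC [C * _]mulrC margin_le_pnorm.
by rewrite (bigD1 i0) //= lerDl sumr_ge0 // => i _; exact: expR_ge0.
Qed.

End ExpLoss.

Lemma le_of_forall_small (R : realFieldType) (a b K l0 : R) : 0 < l0 ->
  (forall l, 0 < l <= l0 -> a - l * K <= b) -> a <= b.
Proof.
move=> l00 small; rewrite leNgt; apply/negP => ba.
have K1 : 0 < `|K| + 1 by rewrite ltr_wpDl.
pose l := Num.min l0 ((a - b) / (`|K| + 1)).
have l0' : 0 < l by rewrite lt_min l00 divr_gt0 // subr_gt0.
have := small l; rewrite l0' ge_min lexx /= => /(_ isT).
have : l * K <= l * `|K| by rewrite ler_wpM2l ?ler_norm // ltW.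
have : l * (`|K| + 1) <= a - b by rewrite -ler_pdivlMr // ge_min lexx orbT.
lra.
Qed.

Section MirrorDescent.
Variables (R : realType) (d n : nat) (p eta : R) (x : 'I_n -> vec R d) (y : 'I_n -> R).
Hypotheses (p1 : 1 < p) (eta0 : 0 < eta).
Local Notation vec := (vec R d).
Local Notation inner := (@inner R d).
Local Notation L := (expL x y).
Local Notation gL := (grad_expL x y).
Local Notation G := (grad_psi p).
Local Notation D := (bregman p).

(* Along the chord from w0, psi grows at least like its tangent and L at most like its
   tangent plus O(l^2); comparing with the chord of psi - eta L and letting l -> 0
   compares the slopes at w0. *)
Lemma descent_of_convex (w0 w1 : vec) :
  convex_on (segment w0 w1) (fun v => psi p v - eta * L v) ->
  eta * (L w1 - L w0 - (inner (gL w0) w1 - inner (gL w0) w0)) <= D w1 w0.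
Proof.
move=> conv; pose g v := psi p v - eta * L v.
pose z l : vec := fun j => l * w1 j + (1 - l) * w0 j.
have chord (l : R) : 0 <= l <= 1 -> g (z l) <= l * g w1 + (1 - l) * g w0.
  move=> l01; apply: conv => //.
    by exists 1; rewrite ?ler01 ?lexx //; apply: funext => j; rewrite subrr mul0r add0r mul1r.
  by exists 0; rewrite ?ler01 ?lexx //; apply: funext => j; rewrite subr0 mul1r mul0r addr0.
have [K K0 [l0 l00 quad]] := expL_segment_le x y w0 w1.
set dpsi := inner (G w0) w1 - inner (G w0) w0.
set dL := inner (gL w0) w1 - inner (gL w0) w0.
suff : dpsi - eta * dL <= g w1 - g w0 by rewrite /bregman -/dpsi /g /= => ?; lra.
apply: (le_of_forall_small (K := eta * K) (l0 := Num.min l0 1)); first by rewrite lt_min l00 ltr01.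
move=> l /andP[lpos]; rewrite le_min => /andP[ll0 ll1].
have hpsi := psi_tangent p1 w0 (z l); rewrite inner_linr in hpsi.
have hL := ler_wpM2l (ltW eta0) (quad l ltac:(by rewrite lpos ll0)).
have hg := chord l ltac:(by rewrite (ltW lpos) ll1).
rewrite -(ler_pM2l lpos); move: hpsi hL hg; rewrite /g /dpsi /dL /z.
lra.
Qed.

Lemma mirror_step_le (w0 w1 u : vec) :
  convex_on (segment w0 w1) (fun v => psi p v - eta * L v) ->
  (forall j, G w1 j = G w0 j - eta * gL w0 j) ->
  eta * (L w1 - L u) <= D u w0 - D u w1.
Proof.
move=> conv step.
have := descent_of_convex conv.
have := ler_wpM2l (ltW eta0) (expL_tangent x y u w0).
rewrite /bregman (inner_subZl u step) (inner_subZl w1 step).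
lra.
Qed.

Variable w : nat -> vec.
Hypotheses (w_pGD : pGD p eta x y w)
  (w_conv : forall t, convex_on (segment (w t) (w t.+1)) (fun v => psi p v - eta * L v)).

Lemma expL_pGD_le (t : nat) : L (w t.+1) <= L (w t).
Proof.
have := mirror_step_le (w t) (@w_conv t) (w_pGD t).
rewrite bregmanxx sub0r; have := bregman_ge0 p1 (w t) (w t.+1).
by move=> ? ?; rewrite -subr_le0 -(pmulr_rle0 _ eta0); lra.
Qed.

Lemma pGD_regret (u : vec) (T : nat) :
  eta * T%:R * L (w T) + D u (w T) <= D u (w 0) + eta * T%:R * L u.
Proof.
elim: T => [|T IH]; first by rewrite !mulr0 !mul0r add0r addr0.
have := mirror_step_le u (@w_conv T) (w_pGD T).
have := ler_wpM2l (mulr_ge0 (ltW eta0) (ler0n _ T)) (expL_pGD_le T).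
rewrite -natr1; lra.
Qed.

End MirrorDescent.

Lemma finite_pos_lbound (R : realFieldType) (n : nat) (f : 'I_n -> R) :
  (forall i, 0 < f i) -> exists2 m, 0 < m & forall i, m <= f i.
Proof.
move=> f0; pose S := 1 + \sum_(i < n) (f i)^-1.
have fS i : (f i)^-1 <= S.
  rewrite /S (bigD1 i) //= addrCA lerDl addr_ge0 // sumr_ge0 // => k _.
  by rewrite invr_ge0 ltW.
have S0 : 0 < S by rewrite ltr_wpDr // sumr_ge0 // => i _; rewrite invr_ge0 ltW.
exists S^-1 => [|i]; first by rewrite invr_gt0.
by rewrite -[f i]invrK lef_pV2 ?posrE ?invr_gt0.
Qed.

Lemma ln_nat_ge (R : realType) (M : R) : \forall t \near \oo, M <= ln t%:R.
Proof.
exists (Num.truncn (expR M)).+1 => // t /= ht.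
have Mt : expR M < t%:R by apply: lt_le_trans (truncnS_gt _) _; rewrite ler_nat.
by rewrite -[M]expRK ler_ln ?posrE ?expR_gt0 ?(lt_trans (expR_gt0 M)) // ltW.
Qed.

Lemma le_of_powR_gap (R : realType) (k a r V N Y : R) :
  0 <= k -> 0 <= N -> 0 <= Y -> 0 <= a -> r < a * Y -> V < Y `^ k * (a * Y - r) ->
  N `^ k * (a * N - r) <= V -> N <= Y.
Proof.
move=> k0 N0 Y0 a0 rY VY NV; rewrite leNgt; apply/negP => YN.
have : Y `^ k * (a * Y - r) <= N `^ k * (a * N - r).
  apply: ler_pM; [exact: powR_ge0 | by rewrite subr_ge0 ltW | |].
    by rewrite ge0_ler_powR ?nnegrE // ltW.
  by rewrite lerD2r ler_wpM2l // ltW.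
by move=> YN'; have := lt_le_trans VY (le_trans YN' NV); rewrite ltxx.
Qed.

Section Margin.
Variables (R : realType) (d n : nat) (x : 'I_n -> vec R d) (y : 'I_n -> R).
Local Notation vec := (vec R d).
Local Notation inner := (@inner R d).

Definition has_margin (v : vec) (m : R) := forall i, m <= y i * inner (x i) v.

Lemma separable_has_margin : lin_separable x y -> exists v, exists2 m, 0 < m & has_margin v m.
Proof.
case=> v sep; have [m m0 hm] := finite_pos_lbound sep.
by exists v, m.
Qed.

Variables (p q C : R).
Hypotheses (p1 : 1 < p) (pq : p^-1 + q^-1 = 1) (n0 : (0 < n)%N).
Hypotheses (y_sign : forall i, y i = 1 \/ y i = -1) (x_bounded : forall i, pnorm q (x i) <= C).

Lemma margin_le (v : vec) (m : R) : has_margin v m -> m <= pnorm p v * C.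
Proof.
by move/(_ (Ordinal n0))/le_trans; apply; exact: margin_le_pnorm p1 pq y_sign x_bounded v _.
Qed.

Lemma norm_bound_gt0 (v : vec) (m : R) : 0 < m -> has_margin v m -> 0 < C.
Proof.
move=> m0 /margin_le mC; rewrite ltNge; apply/negP => C0.
by have := mulr_ge0_le0 (pnorm_ge0 p v) C0; lra.
Qed.

Hypothesis sep : lin_separable x y.

Let margins := [set m : R | exists v : vec, pnorm p v <= 1 /\ has_margin v m].

Let exists_pos_margin : exists2 m, 0 < m & margins m.
Proof.
have p0 : 0 < p by apply: lt_trans p1.
have [v [m m0 hm]] := separable_has_margin sep.
have N1 : 0 < pnorm p v + 1 by rewrite ltr_wpDl ?pnorm_ge0.
pose s := (pnorm p v + 1)^-1.
have s0 : 0 < s by rewrite invr_gt0.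
exists (s * m); first exact: mulr_gt0.
exists (fun j => s * v j); split => [|i].
  by rewrite pnormZ ?(ltW s0) // mulrC ler_pdivrMr // mul1r lerDl.
by rewrite innerZr mulrCA ler_wpM2l ?(ltW s0).
Qed.

Let has_sup_margins : has_sup margins.
Proof.
split; first by have [m _ Em] := exists_pos_margin; exists m.
have C0 : 0 <= C := le_trans (pnorm_ge0 q (x (Ordinal n0))) (x_bounded _).
exists C => m [v [v1 /margin_le mv]].
by apply: le_trans mv _; rewrite ler_piMl.
Qed.

Lemma max_margin_gt0 : 0 < max_margin p x y.
Proof.
have [m m0 Em] := exists_pos_margin.
exact: lt_le_trans m0 (sup_upper_bound has_sup_margins Em).
Qed.

Lemma max_margin_approx (g : R) : g < max_margin p x y ->
  exists v m, [/\ g < m, pnorm p v <= 1 & has_margin v m].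
Proof.
rewrite -subr_gt0 => gM.
have [m [v [v1 hm]]] := sup_adherent gM has_sup_margins.
by rewrite -/(max_margin p x y) opprB addrCA subrr addr0 => gm; exists v, m.
Qed.

Lemma max_margin_approx_inv (e : R) : 0 < e ->
  exists v m, [/\ 0 < m, pnorm p v <= 1, has_margin v m & m^-1 <= (max_margin p x y)^-1 + e].
Proof.
move=> e0; have M0 := max_margin_gt0.
have Me0 : 0 < (max_margin p x y)^-1 + e by rewrite addr_gt0 ?invr_gt0.
have gM : ((max_margin p x y)^-1 + e)^-1 < max_margin p x y.
  by rewrite -[ltRHS]invrK ltf_pV2 ?posrE ?invr_gt0 // ltrDl.
have [v [m [gm v1 hm]]] := max_margin_approx gM.
have m0 : 0 < m by apply: lt_trans gm; rewrite invr_gt0.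
exists v, m; split => //.
by rewrite -[_ + e]invrK lef_pV2 ?posrE ?invr_gt0 // ltW.
Qed.

End Margin.

Lemma ge_log_of_exp_le (R : realType) (t A c k N : R) : 0 < t -> 0 < A -> 0 < c -> 0 < ln t ->
  t * expR (- (c * N)) <= A * ln t `^ k -> c^-1 * (ln t - k * ln (ln t)) - c^-1 * ln A <= N.
Proof.
move=> t0 A0 c0 lnt0 h.
have : ln (t * expR (- (c * N))) <= ln (A * ln t `^ k).
  by rewrite ler_ln ?posrE ?mulr_gt0 ?expR_gt0 ?powR_gt0.
rewrite !lnM ?posrE ?expR_gt0 ?powR_gt0 // expRK ln_powR => lnh.
rewrite -mulrBr -(ler_pM2l c0) mulrA mulfV ?gt_eqF // mul1r; lra.
Qed.

Section Asymptotics.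
Variables (R : realType) (d n : nat) (p eta : R) (x : 'I_n -> vec R d) (y : 'I_n -> R).
Variable w : nat -> vec R d.
Hypotheses (p1 : 1 < p) (eta0 : 0 < eta) (n0 : (0 < n)%N).
Hypotheses (w_pGD : pGD p eta x y w)
  (w_conv : forall t, convex_on (segment (w t) (w t.+1)) (fun v => psi p v - eta * expL x y v)).
Local Notation vec := (vec R d).
Local Notation inner := (@inner R d).
Local Notation L := (expL x y).
Local Notation G := (grad_psi p).
Local Notation D := (bregman p).

Let K0 : R := `|psi p (w 0%N)| + `|inner (G (w 0%N)) (w 0%N)|.

(* The scale r is chosen so that t L(r v) <= 1. *)
Lemma pGD_margin_regret (v : vec) (m r : R) (t : nat) :
  has_margin x y v m -> 0 <= r -> ln t%:R <= r * m ->
  eta * t%:R * L (w t) + D (fun j => r * v j) (w t) <=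
    r `^ p * psi p v + r * `|inner (G (w 0%N)) v| + K0 + eta.
Proof.
move=> hm r0 lnt.
have := pGD_regret p1 eta0 w_pGD (@w_conv) (fun j => r * v j) t.
have := bregmanZl_le p v (w 0%N) r0.
suff : eta * t%:R * L (fun j => r * v j) <= eta by rewrite -/K0; lra.
rewrite -mulrA ger_pMr //.
apply: le_trans (ler_wpM2l (ler0n _ t) (expLZ_le_margin n0 r0 hm)) _.
have [->|t0] := eqVneq t 0%N; first by rewrite mul0r.
have tpos : 0 < t%:R :> R by rewrite ltr0n lt0n.
rewrite -ler_pdivlMl // mulr1.
have -> : t%:R^-1 = expR (- ln t%:R) :> R by rewrite expRN lnK ?posrE.
by rewrite ler_expR lerN2.
Qed.

Lemma expL_pGD_le_log : lin_separable x y -> exists2 A : R, 0 < A &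
  \forall t \near \oo, eta * t%:R * L (w t) <= A * ln t%:R `^ p.
Proof.
move=> /separable_has_margin[v [m m0 hm]].
pose B : R := `|inner (G (w 0%N)) v|.
pose A : R := psi p v / m `^ p + B / m + K0 + eta.
exists A.
  have psi0 : 0 <= psi p v.
    by rewrite (psiE p1) mulr_ge0 ?powR_ge0 // invr_ge0 ltW // (lt_trans ltr01 p1).
  by rewrite /A /K0 ltr_pwDr // !addr_ge0 ?divr_ge0 ?powR_ge0 ?normr_ge0 ?(ltW m0).
move: (ln_nat_ge (1 : R)); apply: filterS => t X1.
have X0 : 0 <= ln t%:R := le_trans ler01 X1.
have lnt : ln t%:R <= ln t%:R / m * m by rewrite divfK ?lt0r_neq0.
have := pGD_margin_regret hm (divr_ge0 X0 (ltW m0)) lnt.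
have := bregman_ge0 p1 (fun j => ln t%:R / m * v j) (w t).
have Xp : 1 <= ln t%:R `^ p by apply: le_trans X1 (le1r_powR X1 (ltW p1)).
have := ler_wpM2r (divr_ge0 (normr_ge0 _) (ltW m0) : 0 <= B / m) (le1r_powR X1 (ltW p1)).
have := ler_wpM2l (addr_ge0 (normr_ge0 _) (normr_ge0 _) : 0 <= K0) Xp.
have := ler_wpM2l (ltW eta0) Xp.
by rewrite powR_div ?(ltW m0) // -/B /A !mulr1; lra.
Qed.

Variables (q C : R).
Hypotheses (pq : p^-1 + q^-1 = 1) (y_sign : forall i, y i = 1 \/ y i = -1)
  (x_bounded : forall i, pnorm q (x i) <= C).

Lemma pnorm_pGD_ge_log : lin_separable x y -> exists K : R, \forall t \near \oo,
  C^-1 * (ln t%:R - p * ln (ln t%:R)) - K <= pnorm p (w t).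
Proof.
move=> sep; have [A A0 hA] := expL_pGD_le_log sep.
have [v [m m0 hm]] := separable_has_margin sep.
have C0 := norm_bound_gt0 p1 pq n0 y_sign x_bounded m0 hm.
exists (C^-1 * ln (n%:R * A / eta)).
move: hA (ln_nat_ge (1 : R)); apply: filterS2 => t hA X1.
have t0 : 0 < t%:R :> R.
  by rewrite ltr0n lt0n; apply: contraTneq X1 => ->; rewrite ln0 // ler10.
apply: ge_log_of_exp_le => //; first by rewrite !mulr_gt0 ?invr_gt0 ?ltr0n.
  exact: lt_le_trans X1.
have nR : 0 < n%:R :> R by rewrite ltr0n.
rewrite -(ler_pM2l (divr_gt0 eta0 nR)).
have -> : eta / n%:R * (n%:R * A / eta * ln t%:R `^ p) = A * ln t%:R `^ p.
  by field; rewrite !gt_eqF.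
apply: le_trans hA.
have -> : forall e : R, eta / n%:R * (t%:R * e) = eta * t%:R * (n%:R^-1 * e).
  by move=> e; ring.
by rewrite ler_wpM2l ?mulr_ge0 ?(ltW eta0) ?(expL_ge_pnorm p1 pq y_sign x_bounded (w t) n0).
Qed.

Lemma pGD_bregman_gap (v : vec) (m : R) (t : nat) :
  pnorm p v <= 1 -> has_margin x y v m -> 0 < m -> 0 <= ln (t%:R : R) ->
  pnorm p (w t) `^ (p - 1) * ((1 - p^-1) * pnorm p (w t) - ln t%:R / m) <=
    K0 + eta + ln t%:R / m * `|inner (G (w 0%N)) v|.
Proof.
move=> v1 hm m0 X0; have p0 : 0 < p := lt_trans ltr01 p1.
have r0 : 0 <= ln t%:R / m by rewrite divr_ge0 ?(ltW m0).
have lnt : ln t%:R <= ln t%:R / m * m by rewrite divfK ?lt0r_neq0.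
have := pGD_margin_regret hm r0 lnt.
have := bregman_ge_pnorm p1 (fun j => ln t%:R / m * v j) (w t) pq.
rewrite psiZ // pnormZ //.
have := mulr_ge0 (mulr_ge0 (ltW eta0) (ler0n R t)) (expL_ge0 x y (w t)).
have := ler_wpM2l (mulr_ge0 (powR_ge0 (pnorm p (w t)) (p - 1)) r0) v1.
rewrite -[pnorm p (w t) `^ p](mulr_powRB1 (pnorm_ge0 p (w t)) p0).
move: (pnorm p (w t)) (_ `^ (p - 1)) => N P; lra.
Qed.

Lemma pnorm_pGD_le_log (v : vec) (m e : R) :
  0 < m -> pnorm p v <= 1 -> has_margin x y v m -> 0 < e ->
  \forall t \near \oo, pnorm p (w t) <= (p / (p - 1) / m + e) * ln t%:R.
Proof.
move=> m0 v1 hm e0.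
have p0 : 0 < p := lt_trans ltr01 p1.
have pm1 : 0 < p - 1 by rewrite subr_gt0.
pose B : R := `|inner (G (w 0%N)) v|.
pose a : R := 1 - p^-1.
have a0 : 0 < a by rewrite subr_gt0 invf_lt1.
have K00 : 0 <= K0 by rewrite addr_ge0.
pose c : R := p / (p - 1) / m + e.
have c0 : 0 < c by rewrite addr_gt0 // !divr_gt0.
have ac : a * c = m^-1 + a * e.
  by rewrite /a /c; field; rewrite !gt_eqF.
pose W : R := K0 + eta + B / m.
have W0 : 0 <= W by rewrite !addr_ge0 ?divr_ge0 ?normr_ge0 ?(ltW eta0) ?(ltW m0).
(* once (c ln t)^(p-1) exceeds Z, the left side of pGD_bregman_gap at N = c ln t
   outgrows its right side, which is linear in ln t *)
pose Z : R := W / (a * e) + 1.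
move: (ln_nat_ge (Num.max 1 (Z `^ (p - 1)^-1 / c))); apply: filterS => t.
rewrite ge_max => /andP[X1 XZ].
have X0 : 0 <= ln t%:R := le_trans ler01 X1.
have Zc : Z <= (c * ln t%:R) `^ (p - 1).
  have Z0 : 0 <= Z by rewrite addr_ge0 ?divr_ge0 ?mulr_ge0 ?(ltW a0) ?(ltW e0).
  have -> : Z = (Z `^ (p - 1)^-1) `^ (p - 1) by rewrite -powRrM mulVf ?gt_eqF ?powRr1.
  rewrite ge0_ler_powR ?nnegrE ?powR_ge0 ?mulr_ge0 ?(ltW c0) ?(ltW pm1) //.
  by rewrite mulrC -ler_pdivrMr.
have gap := pGD_bregman_gap v1 hm m0 X0.
have aeX : 0 < a * e * ln t%:R by rewrite !mulr_gt0 // (lt_le_trans ltr01).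
have acX : a * (c * ln t%:R) = ln t%:R / m + a * e * ln t%:R by rewrite mulrA ac; ring.
apply: (le_of_powR_gap (k := p - 1) (a := a) (r := ln t%:R / m)
  (V := K0 + eta + ln t%:R / m * B)) gap;
  rewrite ?pnorm_ge0 ?mulr_ge0 ?(ltW pm1) ?(ltW a0) ?(ltW c0) // -/c acX;
  [lra | rewrite (addrC (ln t%:R / m)) addrK].
have WX : K0 + eta + ln t%:R / m * B <= W * ln t%:R.
  have := ler_wpM2l K00 X1; have := ler_wpM2l (ltW eta0) X1.
  by rewrite /W !mulr1; lra.
have eZ : Z * (a * e * ln t%:R) = W * ln t%:R + a * e * ln t%:R.
  by rewrite /Z; field; rewrite !gt_eqF.
have := ler_wpM2r (ltW aeX) Zc.
by rewrite eZ; lra.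
Qed.

End Asymptotics.

Theorem lemma5 (R : realType) (d n : nat) (p q C eta : R)
  (x : 'I_n -> vec R d) (y : 'I_n -> R) (w : nat -> vec R d) :
  1 < p -> p^-1 + q^-1 = 1 ->
  (0 < n)%N ->
  (forall i, y i = 1 \/ y i = -1) ->
  lin_separable x y ->
  (forall i, pnorm q (x i) <= C) ->
  0 < eta ->
  pGD p eta x y w ->
  (forall t, convex_on (segment (w t) (w t.+1))
               (fun v => psi p v - eta * expL x y v)) ->
  (exists K : R, \forall t \near \oo,
      C^-1 * (ln t%:R - p * ln (ln t%:R)) - K <= pnorm p (w t)) /\
  (forall e : R, 0 < e -> \forall t \near \oo,
      pnorm p (w t) / ln t%:R <= (max_margin p x y)^-1 * (p / (p - 1)) + e).
Proof.
move=> p1 pq n0 y_sign sep x_bounded eta0 w_pGD w_conv.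
split; first exact (pnorm_pGD_ge_log p1 eta0 n0 w_pGD w_conv pq y_sign x_bounded sep).
move=> e e0; pose k := p / (p - 1).
have k0 : 0 < k by rewrite divr_gt0 ?subr_gt0 // (lt_trans ltr01).
have ek0 : 0 < e / 2 / k by rewrite divr_gt0 // divr_gt0 // ltr0n.
have [v [m [m0 v1 hm mM]]] := max_margin_approx_inv p1 pq n0 y_sign x_bounded sep ek0.
have km : k / m + e / 2 <= (max_margin p x y)^-1 * k + e.
  have := ler_wpM2l (ltW k0) mM.
  by rewrite mulrDr [k * (e / 2 / k)]mulrC divfK ?lt0r_neq0 // mulrC [k * _]mulrC; lra.
have e2 : 0 < e / 2 by rewrite divr_gt0 // ltr0n.
move: (pnorm_pGD_le_log p1 eta0 n0 w_pGD w_conv pq m0 v1 hm e2) (ln_nat_ge (1 : R)).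
apply: filterS2 => t hN X1.
have X0 : 0 < ln t%:R := lt_le_trans ltr01 X1.
by rewrite ler_pdivrMr //; apply: (le_trans hN); rewrite ler_wpM2r // ltW.
Qed.
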